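(* Let $n\ge 7$ and let $S$ be a nonlocal metric basis of $W_{1,n}$ (so $S\subseteq\{0,\dots,n-1\}$ and $|S|\ge 2$). Then: (i) every gap of $S$ has at most $4$ vertices; (ii) at most one gap of $S$ has at least $3$ vertices; (iii) if a gap $A_{i,j}$ of $S$ has at least $2$ vertices, then each gap of $S$ neighboring $A_{i,j}$ (i.e., the gap of the form $A_{h,i}$ and the gap of the form $A_{j,k}$) has at most one vertex. (iv) Moreover, $W_{1,n}$ has a nonlocal metric basis $S'\subseteq\{0,\dots,n-1\}$ that satisfies (i)–(iii) and has no gap with exactly $3$ vertices.
   Context: The wheel $W_{1,n}=K_1+C_n$ has cycle vertices $0,1,\dots,n-1$ (arithmetic modulo $n$, $i$ adjacent to $i\pm1$) and a center adjacent to all of them; $d(u,v)$ is the shortest-path distance. A set $X$ of vertices resolves two vertices $u,v$ if some $x\in X$ satisfies $d(u,x)\neq d(v,x)$. $X$ is a nonlocal resolving set if it resolves every pair of distinct non-adjacent vertices; the nonlocal metric dimension is the minimum size of such a set, and a nonlocal metric basis is a nonlocal resolving set of minimum size (for $n\ge 7$ no such basis contains the center). For $X\subseteq\{0,\dots,n-1\}$ with $|X|\ge 2$, a gap of $X$ is a set $A_{i,j}=\{i+1,i+2,\dots,j-1\}$ (indices mod $n$, proceeding from $i$ in increasing direction until $j$), where $i\ne j$ are elements of $X$ such that $\{i+1,\dots,j-1\}\cap X=\emptyset$; a gap may be empty, and its number of vertices is $|A_{i,j}|$. Gaps $A_{h,i}$ and $A_{i,j}$ sharing the endpoint $i$ are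 called neighboring gaps. *)

From mathcomp Require Import all_boot.
Set Implicit Arguments. Unset Strict Implicit. Unset Printing Implicit Defensive.

Fixpoint reachk (T : finType) (e : rel T) (k : nat) (u v : T) : bool :=
  if k is k'.+1 then reachk e k' u v || [exists w, e u w && reachk e k' w v]
  else u == v.

(* shortest-path distance: least k <= #|T| with reachk e k u v
   (equals #|T| when v is unreachable, which never happens in a connected graph) *)
Definition dist (T : finType) (e : rel T) (u v : T) : nat :=
  find (fun k => reachk e k u v) (iota 0 #|T|).

(* vertices: Some i for the cycle vertex i (0 <= i < n), None for the center *)
Definition wvert (n : nat) := option 'I_n.

Definition cyc_adj (n : nat) (i j : 'I_n) : bool :=
  (i != j) && ((j == (i.+1 %% n) :> nat) || (i == (j.+1 %% n) :> nat)).

Definition wheel_adj (n : nat) : rel (wvert n) :=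
  fun u v => match u, v with
  | Some i, Some j => cyc_adj i j
  | None, Some _ | Some _, None => true
  | None, None => false
  end.

Definition wdist (n : nat) (u v : wvert n) : nat := dist (@wheel_adj n) u v.

Definition nonlocal_resolving (n : nat) (X : {set wvert n}) : Prop :=
  forall u v : wvert n, u != v -> ~~ wheel_adj u v ->
    exists2 x, x \in X & wdist u x != wdist v x.

Definition nonlocal_metric_basis (n : nat) (X : {set wvert n}) : Prop :=
  nonlocal_resolving X /\
  forall Y : {set wvert n}, nonlocal_resolving Y -> #|X| <= #|Y|.

Definition cstep (n : nat) (i v : 'I_n) : nat := (v + n - i) %% n.

(* A_{i,j} = {i+1, ..., j-1} (mod n) *)
Definition gapA (n : nat) (i j : 'I_n) : {set 'I_n} :=
  [set v | (0 < cstep i v) && (cstep i v < cstep i j)].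

Definition is_gap (n : nat) (X : {set 'I_n}) (i j : 'I_n) : Prop :=
  [/\ i \in X, j \in X, i != j & gapA i j :&: X = set0].

Definition gap_props (n : nat) (X : {set 'I_n}) : Prop :=
  [/\ forall i j, is_gap X i j -> #|gapA i j| <= 4,
      forall i j i' j', is_gap X i j -> is_gap X i' j' ->
         3 <= #|gapA i j| -> 3 <= #|gapA i' j'| -> i = i' /\ j = j'
    & forall i j, is_gap X i j -> 2 <= #|gapA i j| ->
         (forall h, is_gap X h i -> #|gapA h i| <= 1) /\
         (forall k, is_gap X j k -> #|gapA j k| <= 1)].

From mathcomp Require Import all_boot zify.
Set Implicit Arguments. Unset Strict Implicit. Unset Printing Implicit Defensive.

(* For n >= 3 two cycle vertices of the wheel are at distance 0, 1 or 2 and the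
   center is adjacent to everything, so x resolves a non-adjacent pair u, v of
   cycle vertices exactly when x lies in exactly one of the closed
   neighbourhoods N[u], N[v].  For v = u + 2 this symmetric difference is
   {u-1, u, u+2, u+3}; for v farther away it is the union of N[u] and N[v].
   Hence S is nonlocal resolving iff it meets every window {u-1, u, u+2, u+3}
   and any two holes of S (vertices u with N[u] disjoint from S) are at cyclic
   distance at most 2.  A gap of size >= 5, or two neighbouring gaps of size
   >= 2, leave a window empty, and the holes in two distinct gaps of size >= 3
   are too far apart.  A gap {i+1, i+2, i+3} disappears when its end i+4 is
   moved to i+5 (if i+5 is free) or to i+3 (otherwise); this keeps both
   conditions and the cardinality, since the only holes of the new set are
   among i+2 and i+3. *)

Lemma modn_cases n a : 0 < n -> a < n + n ->
  (a < n /\ a %% n = a) \/ (n <= a /\ a %% n = a - n).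
Proof.
move=> n0 an; case: (ltnP a n) => h; [by left; rewrite modn_small|right].
by rewrite -{1}(subnK h) modnDr modn_small //; lia.
Qed.

(* [lia] cannot reason about [_ %% n] for a variable [n]; every remainder
   occurring here is of a number below [2 n], so it is one of two linear terms. *)
Ltac elim_modn n :=
  intros; repeat (repeat match goal with H : context [_ %% n] |- _ => revert H end;
  match goal with
  | |- context [?a %% n] =>
      let r := fresh "r" in
      have := @modn_cases n a ltac:(lia) ltac:(lia); generalize (a %% n);
      intros r [[? ?]|[? ?]]
  end); intros.

Ltac cyclic_lia n :=
  rewrite ?inE; repeat match goal with H : is_true (_ \in _) |- _ => clear H end;
  elim_modn n; lia.

Lemma disjointP (T : finType) (A B : {pred T}) :
  reflect (forall x, x \in A -> x \notin B) [disjoint A & B].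
Proof. by rewrite disjoint_subset; apply: (iffP subsetP) => AB x /AB; rewrite inE. Qed.

Lemma card_setU1D (T : finType) (S : {set T}) p q :
  p \in S -> q \notin S -> #|q |: (S :\ p)| = #|S|.
Proof. by move=> pS qS; rewrite cardsU1 !inE negb_and qS orbT (cardsD1 p S) pS. Qed.

Lemma disjoint_setU1D (T : finType) (A S : {set T}) p q :
  p \notin A -> [disjoint A & q |: (S :\ p)] -> [disjoint A & S].
Proof.
move=> pA /disjointP AS'; apply/disjointP => x xA; have := AS' x xA.
by rewrite !inE negb_or negb_and negbK => /andP[_ /orP[/eqP xp|//]]; rewrite -xp xA in pA.
Qed.

Section CyclicOffsets.
Variable n : nat.
Implicit Types (i u v x : 'I_n) (a b d t : nat).

Definition cshift i t : 'I_n :=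
  Ordinal (ltn_pmod (i + t) (leq_ltn_trans (leq0n i) (ltn_ord i))).

Lemma cshiftE i t : val (cshift i t) = (i + t) %% n.
Proof. by []. Qed.

Lemma cstep_lt i v : cstep i v < n.
Proof. exact: ltn_pmod (leq_ltn_trans (leq0n i) (ltn_ord i)). Qed.

Lemma cshift_cstep i v : cshift i (cstep i v) = v.
Proof. by apply: val_inj; rewrite cshiftE /cstep; case: i v => a ? [b ?] /=; cyclic_lia n. Qed.

Lemma cstep_cshift i t : t < n -> cstep i (cshift i t) = t.
Proof. by rewrite /cstep cshiftE; case: i => a ? /=; cyclic_lia n. Qed.

Lemma cshift0 i : cshift i 0 = i.
Proof. by apply: val_inj; rewrite cshiftE addn0 modn_small. Qed.

Lemma cshiftD i a b : cshift (cshift i a) b = cshift i (a + b).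
Proof. by apply: val_inj; rewrite !cshiftE modnDml addnA. Qed.

Lemma cshiftI t : injective (cshift^~ t).
Proof.
move=> u v /(congr1 val); rewrite !cshiftE => /eqP; rewrite eqn_modDr.
by rewrite !modn_small // => /eqP/val_inj.
Qed.

Lemma eq_cshift i a b : (cshift i a == cshift i b) = (a == b %[mod n]).
Proof. by rewrite -val_eqE /= eqn_modDl. Qed.

Lemma cshift_offset i v : exists2 t, t < n & v = cshift i t.
Proof. by exists (cstep i v); rewrite ?cstep_lt ?cshift_cstep. Qed.

Lemma cstep_eq0 u v : (cstep u v == 0) = (u == v).
Proof.
apply/eqP/eqP => [e|<-]; first by rewrite -(cshift_cstep u v) e cshift0.
by rewrite /cstep addKn modnn.
Qed.

Lemma cstepxx u : cstep u u = 0.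
Proof. by apply/eqP; rewrite cstep_eq0. Qed.

Lemma cstepD u v x : cstep u x = (cstep u v + cstep v x) %% n.
Proof. by rewrite /cstep; case: u v x => a ? [b ?] [c ?] /=; cyclic_lia n. Qed.

Lemma cstepC u v : u != v -> cstep v u = n - cstep u v.
Proof.
rewrite -cstep_eq0 /cstep; case: u v => a ? [b ?] /=; cyclic_lia n.
Qed.

Lemma cstep_cshiftl u d x : d < n -> cstep (cshift u d) x = (cstep u x + n - d) %% n.
Proof.
move=> dn; rewrite (cstepD u (cshift u d) x) cstep_cshift //.
by have := cstep_lt (cshift u d) x; cyclic_lia n.
Qed.

End CyclicOffsets.

Section WheelDistance.
Variable n : nat.
Hypothesis n3 : 3 <= n.
Implicit Types (S : {set 'I_n}) (u v x : 'I_n).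

Lemma cyc_adjC : symmetric (@cyc_adj n).
Proof. by move=> u v; rewrite /cyc_adj eq_sym orbC. Qed.

Lemma cyc_adjE u v : cyc_adj u v = (cstep u v \in [:: 1; n.-1]).
Proof. by rewrite /cyc_adj /cstep -val_eqE; case: u v => a ? [b ?] /=; cyclic_lia n. Qed.

Lemma wdist_cycle u v :
  wdist (Some u) (Some v) = if u == v then 0 else if cyc_adj u v then 1 else 2.
Proof.
have reach1 : reachk (@wheel_adj n) 1 (Some u) (Some v) = (u == v) || cyc_adj u v.
  congr (_ || _); apply/existsP/idP => [[w /andP[uw /eqP vw]] | uv].
    by rewrite vw in uw.
  by exists (Some v); rewrite /= uv eqxx.
have reach2 : reachk (@wheel_adj n) 2 (Some u) (Some v).
  by apply/orP; right; apply/existsP; exists None; apply/existsP; exists (Some v); rewrite /= eqxx.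
have find3 (P : pred nat) s : find P [:: 0, 1, 2 & s] =
    if P 0 then 0 else if P 1 then 1 else if P 2 then 2 else (find P s).+3.
  by rewrite /=; case: (P 0); case: (P 1); case: (P 2).
rewrite /wdist /dist card_option card_ord.
have -> : n.+1 = (n - 2).+3 by lia.
by rewrite find3 reach1 reach2 /= (inj_eq Some_inj); case: (u == v).
Qed.

Definition cnbhd u : {set 'I_n} := [set x | (u == x) || cyc_adj u x].

Lemma mem_cnbhd u x : (x \in cnbhd u) = (cstep u x \in [:: n.-1; 0; 1]).
Proof.
rewrite inE cyc_adjE -cstep_eq0 !inE.
by have := cstep_lt u x; case: (cstep u x) => [|[|k]] /=; rewrite ?orbF; lia.
Qed.

Lemma wdist_neq u v x : u != v -> ~~ cyc_adj u v ->
  (wdist (Some u) (Some x) != wdist (Some v) (Some x)) =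
  ((x \in cnbhd u) != (x \in cnbhd v)).
Proof.
move=> uv nadj; rewrite !wdist_cycle !inE.
have vu : (v == u) = false by rewrite eq_sym (negbTE uv).
case: (eqVneq u x) => [<-|ux]; first by rewrite vu [cyc_adj v u]cyc_adjC (negbTE nadj).
case: (eqVneq v x) => [<-|vx]; first by rewrite (negbTE nadj).
by case: (cyc_adj u x); case: (cyc_adj v x).
Qed.

Definition resolving_cnbhd S := forall u v, u != v -> ~~ cyc_adj u v ->
  exists2 x, x \in S & (x \in cnbhd u) != (x \in cnbhd v).

Lemma nonlocal_resolving_cycle S :
  nonlocal_resolving [set Some i | i in S] <-> resolving_cnbhd S.
Proof.
split=> [res u v uv nadj | res [u|] [v|] //= uv nadj].
  have [_ /imsetP[x xS ->]] := res (Some u) (Some v) uv nadj.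
  by rewrite wdist_neq // => ?; exists x.
have [x xS dx] := res u v uv nadj.
by exists (Some x); [apply: imset_f | rewrite wdist_neq].
Qed.

End WheelDistance.

Section Windows.
Variable n : nat.
Implicit Types (S : {set 'I_n}) (u v x : 'I_n).

Definition window2 u : {set 'I_n} := [set x | cstep u x \in [:: n.-1; 0; 2; 3]].

Definition dist2_resolved S := forall u, exists2 x, x \in S & x \in window2 u.

Definition hole S u := [disjoint cnbhd u & S].

Definition holes_close S :=
  forall u v, hole S u -> hole S v -> ~~ (3 <= cstep u v <= n - 3).

Hypothesis n5 : 5 <= n.
Let n3 : 3 <= n. Proof. exact: leq_trans n5. Qed.

Lemma cnbhd_sdiff2 u x :
  ((x \in cnbhd u) != (x \in cnbhd (cshift u 2))) = (x \in window2 u).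
Proof.
rewrite !(mem_cnbhd n3) cstep_cshiftl; last lia.
by have := cstep_lt u x; cyclic_lia n.
Qed.

Lemma cnbhd_far u v x : 3 <= cstep u v <= n - 3 -> x \in cnbhd u -> x \notin cnbhd v.
Proof.
rewrite !(mem_cnbhd n3) (cstepD u v x).
by have := cstep_lt v x; have := cstep_lt u v; cyclic_lia n.
Qed.

Lemma resolving_cnbhdP S : resolving_cnbhd S <-> dist2_resolved S /\ holes_close S.
Proof.
split=> [res | [d2 far] u v uv nadj].
  split=> [u | u v hu hv]; last apply/negP => duv.
    have [||x xS] := res u (cshift u 2); last by exists x; rewrite -?cnbhd_sdiff2.
      by rewrite -{1}(cshift0 u) eq_cshift; cyclic_lia n.
    by rewrite (cyc_adjE n3) cstep_cshift //; cyclic_lia n.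
  have [||x xS] := res u v.
  - by rewrite -cstep_eq0; lia.
  - by rewrite (cyc_adjE n3) !inE; lia.
  by rewrite (disjointFl hu xS) (disjointFl hv xS).
have [d2u|[d2v|dfar]] : cstep u v = 2 \/ cstep v u = 2 \/ 3 <= cstep u v <= n - 3.
  rewrite (cstepC uv); move: uv nadj; rewrite -cstep_eq0 (cyc_adjE n3) !inE.
  by have := cstep_lt u v; lia.
- have [x xS] := d2 u; rewrite -(cshift_cstep u v) d2u -cnbhd_sdiff2 => xd.
  by exists x.
- have [x xS] := d2 v; rewrite -(cshift_cstep v u) d2v -cnbhd_sdiff2 => xd.
  by exists x; rewrite // eq_sym.
have dfar' : 3 <= cstep v u <= n - 3 by rewrite (cstepC uv); lia.
have meet w : ~~ hole S w -> exists2 x, x \in S & x \in cnbhd w.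
  by rewrite /hole -setI_eq0 => /set0Pn[x]; rewrite inE => /andP[xw xS]; exists x.
case: (boolP (hole S u)) => [hu|/meet[x xS xu]]; last first.
  by exists x; rewrite // xu (negbTE (cnbhd_far dfar xu)).
case: (boolP (hole S v)) => [hv|/meet[x xS xv]]; last first.
  by exists x; rewrite // xv (negbTE (cnbhd_far dfar' xv)).
by have := far u v hu hv; rewrite dfar.
Qed.

End Windows.

Section Gaps.
Variable n : nat.
Implicit Types (S : {set 'I_n}) (h i j k x : 'I_n).

Lemma gapA_card i j : i != j -> #|gapA i j| = (cstep i j).-1.
Proof.
rewrite -cstep_eq0 => ij; have jn := cstep_lt i j.
have inj : injective (fun k : 'I_(cstep i j).-1 => cshift i k.+1).
  move=> a b /eqP; have := ltn_ord a; have := ltn_ord b => bn an.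
  by rewrite eq_cshift !modn_small ?eqSS => [/eqP/val_inj //||]; lia.
rewrite -[(cstep i j).-1]card_ord -(card_imset _ inj); congr #|pred_of_set _|.
apply/setP=> x; rewrite inE; apply/idP/imsetP => [xg|[k _ ->]].
  have xlt : (cstep i x).-1 < (cstep i j).-1 by lia.
  by exists (Ordinal xlt); rewrite //= prednK ?cshift_cstep //; lia.
by have kn := ltn_ord k; rewrite cstep_cshift; lia.
Qed.

Lemma gapA_card3 i j : i != j -> #|gapA i j| = 3 -> j = cshift i 4.
Proof.
move=> ij; rewrite gapA_card // -{2}(cshift_cstep i j) => c3.
by congr cshift; move: c3; have := cstep_lt i j; lia.
Qed.

Lemma notin_gap S i j x : is_gap S i j -> x \in S -> ~~ (0 < cstep i x < cstep i j).
Proof.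
case=> _ _ _ gS xS; apply/negP => xg.
by have := in_set0 x; rewrite -gS inE xS inE xg.
Qed.

Lemma gap_ge3_hole S i j : is_gap S i j -> 3 <= #|gapA i j| -> hole S (cshift i 2).
Proof.
move=> g; have [_ _ ij _] := g; rewrite gapA_card // => c.
have jn := cstep_lt i j; apply/disjointP => x.
rewrite (mem_cnbhd (_ : 3 <= n)) ?cstep_cshiftl; try lia.
by move=> xN; apply/negP => /(notin_gap g); move: xN; have := cstep_lt i x; cyclic_lia n.
Qed.

Lemma gap_le4 S i j : dist2_resolved S -> is_gap S i j -> #|gapA i j| <= 4.
Proof.
move=> d2 g; have [_ _ ij _] := g; rewrite gapA_card // leqNgt; apply/negP => c.
have jn := cstep_lt i j; have [x /(notin_gap g)] := d2 (cshift i 2).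
by rewrite inE cstep_cshiftl; [have := cstep_lt i x; cyclic_lia n | lia].
Qed.

Lemma gap_neighbor_le1 S h i j : dist2_resolved S -> is_gap S h i -> is_gap S i j ->
  2 <= #|gapA h i| -> #|gapA i j| <= 1.
Proof.
move=> d2 ghi gij; have [_ _ hi _] := ghi; have [_ _ ij _] := gij.
rewrite !gapA_card // leqNgt => c1; apply/negP => c2.
have jn := cstep_lt i j; have [x xS] := d2 (cshift i n.-1).
have := notin_gap ghi xS; have := notin_gap gij xS; rewrite (cstepD h i x).
rewrite inE cstep_cshiftl; last lia.
by have := cstep_lt i x; have := cstep_lt h i; cyclic_lia n.
Qed.

Lemma gap_ge3_unique S i j i' j' : holes_close S -> is_gap S i j -> is_gap S i' j' ->
  3 <= #|gapA i j| -> 3 <= #|gapA i' j'| -> i = i' /\ j = j'.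
Proof.
move=> hc g g' c c'; have hl := gap_ge3_hole g c; have hl' := gap_ge3_hole g' c'.
have [iS jS ij _] := g; have [iS' jS' ij' _] := g'.
move: c c'; rewrite !gapA_card // => c c'; have jn := cstep_lt i j.
case: (eqVneq i i') => [ii' | ii']; first subst i'.
  split=> //; rewrite -(cshift_cstep i j) -(cshift_cstep i j'); congr cshift.
  have := notin_gap g jS'; have := notin_gap g' jS; move: ij ij'; rewrite -!cstep_eq0; lia.
exfalso; have := hc _ _ hl hl'.
rewrite cstep_cshiftl ?(cstepD i i' (cshift i' 2)) ?cstep_cshift; try lia.
have := notin_gap g iS'; have := notin_gap g' iS; rewrite (cstepC ii').
move: ii'; rewrite -cstep_eq0.
by have := cstep_lt i i'; have := cstep_lt i' j'; cyclic_lia n.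
Qed.

Lemma gap_props_of S : dist2_resolved S -> holes_close S -> gap_props S.
Proof.
move=> d2 hc; split=> [i j | i j i' j' | i j g c]; first exact: gap_le4.
  exact: gap_ge3_unique.
split=> [h g' | k g']; last exact: gap_neighbor_le1 g g' c.
by rewrite leqNgt; apply: contraTN c => /(gap_neighbor_le1 d2 g' g); rewrite -ltnNge.
Qed.

End Gaps.

Section ThreeGapShift.
Variables (n : nat) (S : {set 'I_n}) (i q : 'I_n).
Hypotheses (n7 : 7 <= n) (S_dist2 : dist2_resolved S) (S_holes : holes_close S)
  (gap3 : is_gap S i (cshift i 4)).

Let n3 : 3 <= n. Proof. exact: leq_trans n7. Qed.
Let step4 : cstep i (cshift i 4) = 4. Proof. by rewrite cstep_cshift //; lia. Qed.

Lemma three_gap_hole u : hole S u -> u = cshift i 2.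
Proof.
have [iS i4S i4 _] := gap3.
have hole2 : hole S (cshift i 2) by apply: gap_ge3_hole gap3 _; rewrite gapA_card ?step4.
move=> hu; have [t tn ut] := cshift_offset i u; subst u; congr cshift.
have := S_holes hole2 hu; have := disjointFl hu iS; have := disjointFl hu i4S.
by rewrite !(mem_cnbhd n3) !cstep_cshiftl ?cstepxx ?step4 ?cstep_cshift //; cyclic_lia n.
Qed.

Let S' := q |: (S :\ cshift i 4).

Hypotheses (qS : q \notin S) (q1 : q != cshift i 1) (S'5 : cshift i 5 \in S')
  (S'36 : (cshift i 3 \in S') || (cshift i 6 \in S')).

Lemma shift_dist2_resolved : dist2_resolved S'.
Proof.
have [iS _ i4 _] := gap3.
move=> u; have [t tn ->] := cshift_offset i u; have [x xS xw] := S_dist2 (cshift i t).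
case: (eqVneq x (cshift i 4)) => [x4 | x4]; last by exists x; rewrite // !inE x4 xS orbT.
have : t \in [:: 1; 2; 4; 5].
  by move: xw; rewrite x4 inE cstep_cshiftl // step4; cyclic_lia n.
rewrite !inE => /or4P[] /eqP->.
- exists i; first by rewrite !inE i4 iS orbT.
  by rewrite inE cstep_cshiftl ?cstepxx; cyclic_lia n.
- by exists (cshift i 5); rewrite // inE cstep_cshiftl ?cstep_cshift; cyclic_lia n.
- by case/orP: S'36 => ?; [exists (cshift i 3) | exists (cshift i 6)];
    rewrite // inE cstep_cshiftl ?cstep_cshift; cyclic_lia n.
- by exists (cshift i 5); rewrite // inE cstep_cshiftl ?cstep_cshift; cyclic_lia n.
Qed.

Lemma shift_hole u : hole S' u -> u = cshift i 2 \/ u = cshift i 3.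
Proof.
move=> hu; have [t tn ut] := cshift_offset i u.
case: (boolP (cshift i 4 \in cnbhd u)) => [p_u|]; last first.
  by move/disjoint_setU1D/(_ hu)/three_gap_hole; left.
right; rewrite ut; congr cshift; have := disjointFl hu S'5; move: p_u.
by rewrite ut !(mem_cnbhd n3) !cstep_cshiftl ?cstep_cshift; cyclic_lia n.
Qed.

Lemma shift_holes_close : holes_close S'.
Proof.
move=> u v /shift_hole[]-> /shift_hole[]->;
  by rewrite cstep_cshiftl ?cstep_cshift; cyclic_lia n.
Qed.

Lemma shift_no_gap3 h k : is_gap S' h k -> #|gapA h k| != 3.
Proof.
have [_ i4S _ _] := gap3.
move=> g; have [hS' kS' hk _] := g; apply/eqP => c3.
have hl : hole S' (cshift h 2) by apply: gap_ge3_hole g _; rewrite c3.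
have k4 := gapA_card3 hk c3.
case: (shift_hole hl) => [/cshiftI hi | ].
  by move: kS'; rewrite k4 hi !inE eqxx /= orbF => /eqP p_q; move: qS; rewrite -p_q i4S.
rewrite (_ : 3 = 1 + 2) // -cshiftD => /cshiftI hi.
move: hS'; rewrite hi !inE eq_sym (negbTE q1) /= => /andP[_].
by move/(notin_gap gap3); rewrite cstep_cshift ?step4; cyclic_lia n.
Qed.

Lemma three_gap_shift :
  [/\ dist2_resolved S', holes_close S', #|S'| = #|S|
    & forall h k, is_gap S' h k -> #|gapA h k| != 3].
Proof.
have [_ i4S _ _] := gap3.
split; [exact: shift_dist2_resolved | exact: shift_holes_close | | exact: shift_no_gap3].
exact: card_setU1D.
Qed.

End ThreeGapShift.

Lemma remove_three_gap n (S : {set 'I_n}) i :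
  7 <= n -> dist2_resolved S -> holes_close S -> is_gap S i (cshift i 4) ->
  exists S' : {set 'I_n}, [/\ dist2_resolved S', holes_close S', #|S'| = #|S|
    & forall h k, is_gap S' h k -> #|gapA h k| != 3].
Proof.
move=> n7 d2 hc g.
have gapS t : 0 < t < 4 -> cshift i t \notin S.
  by move=> t4; apply/negP => /(notin_gap g); rewrite !cstep_cshift; cyclic_lia n.
have i54 : cshift i 5 != cshift i 4 by rewrite eq_cshift; cyclic_lia n.
case: (boolP (cshift i 5 \in S)) => i5S.
  exists (cshift i 3 |: (S :\ cshift i 4)); apply: three_gap_shift => //.
  - exact: gapS.
  - by rewrite eq_cshift; cyclic_lia n.
  - by rewrite !inE i54 i5S orbT.
  - by rewrite setU11.
exists (cshift i 5 |: (S :\ cshift i 4)); apply: three_gap_shift => //.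
- by rewrite eq_cshift; cyclic_lia n.
- by rewrite setU11.
(* The window of i+3 is {i+2, i+3, i+5, i+6}, and only i+6 can lie in S. *)
have [x xS xw] := d2 (cshift i 3); have [t tn xt] := cshift_offset i x; subst x.
have t5 : t != 5 by apply: contraNneq i5S => <-.
have t6 : t = 6.
  move: t5 xw (notin_gap g xS); rewrite inE cstep_cshiftl ?cstep_cshift //; try lia.
  by cyclic_lia n.
by apply/orP; right; rewrite -t6 !inE xS andbT !eq_cshift; cyclic_lia n.
Qed.

Lemma nonlocal_metric_basis_card n (X Y : {set wvert n}) :
  nonlocal_metric_basis X -> nonlocal_resolving Y -> #|Y| = #|X| ->
  nonlocal_metric_basis Y.
Proof. by move=> [_ minX] resY YX; split=> // Z resZ; rewrite YX minX. Qed.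

Theorem lemma4p2 (n : nat) (Hn : 7 <= n) (S : {set 'I_n}) :
  nonlocal_metric_basis [set Some i | i in S] ->
  gap_props S /\
  exists S' : {set 'I_n},
    [/\ nonlocal_metric_basis [set Some i | i in S'], gap_props S'
      & forall i j, is_gap S' i j -> #|gapA i j| != 3].
Proof.
move=> basisS; have [resS _] := basisS.
have n3 : 3 <= n by lia.
have resolvingP (X : {set 'I_n}) :
    nonlocal_resolving [set Some i | i in X] <-> dist2_resolved X /\ holes_close X.
  by rewrite nonlocal_resolving_cycle // resolving_cnbhdP //; lia.
have [S_d2 S_holes] := iffLR (resolvingP S) resS.
split; first exact: gap_props_of.
pose three_gap_at i := [&& i \in S, cshift i 4 \in S & gapA i (cshift i 4) :&: S == set0].
case: (pickP three_gap_at) => [i /and3P[iS i4S /eqP gS] | no_gap3].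
  have i4 : i != cshift i 4 by rewrite -{1}(cshift0 i) eq_cshift; cyclic_lia n.
  have [S' [S'_d2 S'_holes S'_card S'_no3]] :=
    remove_three_gap Hn S_d2 S_holes (And4 iS i4S i4 gS).
  exists S'; split=> //; last exact: gap_props_of.
  apply: nonlocal_metric_basis_card basisS _ _; first exact/resolvingP.
  by rewrite !card_imset //; exact: Some_inj.
exists S; split=> //; first exact: gap_props_of.
move=> i j [iS jS ij gS]; apply/eqP => /(gapA_card3 ij) j4.
by move: (no_gap3 i); rewrite /three_gap_at iS -j4 jS gS eqxx.
Qed.
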